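(* Let $n,k,d$ be integers with $1\le k\le d<n$, let $\alpha,\gamma>0$, and let $j$ be an integer with $0\le j\le k-1$. Then $$C^{\mathrm{exact}}_{n,k,d}(\alpha,\gamma)\ \ge\ \frac{n}{n-j}\, C^{\mathrm{exact}}_{n-j,k-j,d-j}(\alpha,\gamma).$$
   Context: A distributed storage system (DSS) with parameters $(n,k,d)$ stores a file across $n$ nodes, each storing an amount $\alpha$ of information (e.g. $\alpha$ symbols over a finite field, where symbols may be split into arbitrarily many sub-symbols), such that the file can be reconstructed from the contents of any $k$ nodes, and any lost node can be repaired by contacting any $d$ of the remaining nodes, each of which transmits an amount $\beta$ to the replacement node, for a total repair bandwidth $\gamma=d\beta$. Repair is exact: the replacement node stores exactly the same content as the lost node. $C^{\mathrm{exact}}_{n,k,d}(\alpha,\gamma)$ denotes the maximum size of a file that can be stored by such an exact-repair DSS with $n$ nodes, node size $\alpha$ and total repair bandwidth $\gamma$. *)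

From HB Require Import structures.
From mathcomp Require Import all_boot all_order all_algebra.
From mathcomp Require Import all_classical all_reals.
Set Implicit Arguments. Unset Strict Implicit. Unset Printing Implicit Defensive.
Import Order.TTheory GRing.Theory Num.Theory.
Local Open Scope ring_scope.

(* q is the size of a finite field: a prime power. *)
Definition prime_power (q : nat) : Prop :=
  exists p e : nat, prime p /\ (0 < e)%N /\ q = (p ^ e)%N.

(* An exact-repair DSS with parameters (n,k,d) over an alphabet of q symbols:
   the file is B symbols, every node stores a symbols, every helper sends
   b symbols.  Encoding/decoding/repair functions are arbitrary (non-linear
   codes allowed).
   - reconstruction: from the contents of any k nodes the file is recovered;
   - exact repair: for any lost node i and any set H of d other nodes, each
     helper j in H sends a function h j of its own content, and from these
     messages the content of node i is reproduced exactly. *)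
Definition is_exact_DSS (n k d q B a b : nat) : Prop :=
  exists enc : 'I_n -> {ffun 'I_B -> 'I_q} -> {ffun 'I_a -> 'I_q},
    (forall S : {set 'I_n}, #|S| = k ->
       exists dec : {ffun 'I_n -> {ffun 'I_a -> 'I_q}} -> {ffun 'I_B -> 'I_q},
         forall (f : {ffun 'I_B -> 'I_q}) (y : {ffun 'I_n -> {ffun 'I_a -> 'I_q}}),
           (forall i, i \in S -> y i = enc i f) -> dec y = f)
    /\
    (forall (i : 'I_n) (H : {set 'I_n}), #|H| = d -> i \notin H ->
       exists (h : 'I_n -> {ffun 'I_a -> 'I_q} -> {ffun 'I_b -> 'I_q})
              (rep : {ffun 'I_n -> {ffun 'I_b -> 'I_q}} -> {ffun 'I_a -> 'I_q}),
         forall (f : {ffun 'I_B -> 'I_q}) (m : {ffun 'I_n -> {ffun 'I_b -> 'I_q}}),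
           (forall j, j \in H -> m j = h j (enc j f)) -> rep m = enc i f).

(* Achievable normalized file sizes: each field symbol is split into L
   sub-symbols, so the file has size B/L, nodes store a/L <= alpha and
   each of the d helpers sends b/L <= beta = gamma/d. *)
Definition achievable_sizes (R : realType) (n k d : nat) (alpha gamma : R) : set R :=
  [set x | exists q L B a b : nat,
      prime_power q /\ (0 < L)%N /\
      a%:R / L%:R <= alpha /\
      b%:R / L%:R <= gamma / d%:R /\
      is_exact_DSS n k d q B a b /\
      x = B%:R / L%:R].

Definition C_exact (R : realType) (n k d : nat) (alpha gamma : R) : R :=
  sup (achievable_sizes n k d alpha gamma).

(* Place one independent copy of an exact-repair code with parameters (n-j, k-j, d-j) on
   every injective placement of its n-j nodes among n nodes.  Any k nodes contain at least
   k-j nodes of each copy, so they recover every copy.  A lost node is repaired copy by copy,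
   each copy through it using d-j of the d helpers that it contains; by the symmetry of the
   construction under permutations of the nodes, every helper serves the same number of
   copies, a fraction (d-j)/d of those through the lost node, so the total repair bandwidth
   does not grow.  If N is the number of placements, each node lies in (n-j)N/n of them:
   the file is N times larger while node size and bandwidth are (n-j)N/n times larger. *)

From mathcomp Require Import all_boot all_order all_algebra.
From mathcomp Require Import all_classical all_reals.
From mathcomp Require Import perm zify.
From mathcomp.algebra_tactics Require Import ring lra.
Import Order.TTheory GRing.Theory Num.Theory.
Set Implicit Arguments. Unset Strict Implicit. Unset Printing Implicit Defensive.

Lemma card_ffun_ord q a : #|{ffun 'I_a -> 'I_q}| = (q ^ a)%N.
Proof. by rewrite card_ffun !card_ord. Qed.

Lemma card_ffun_default (T U : finType) (D : {set T}) (u0 : U) :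
  #|[set f : {ffun T -> U} | [forall x, (x \notin D) ==> (f x == u0)]]| = (#|U| ^ #|D|)%N.
Proof.
rewrite -cardsT -(card_pffun_on u0 D [set: U]); apply: eq_card => f; rewrite inE.
apply/forallP/pffun_onP => [h | [h _] x]; last first.
  by apply/implyP; apply: contraR => fx; apply: (fintype.subsetP h); rewrite inE.
split=> [|y _]; last by rewrite inE.
by apply/fintype.subsetP => x; rewrite inE; apply: contraR => xD; rewrite (implyP (h x)).
Qed.

Lemma pick_unique (T : finType) (P : pred T) x :
  P x -> (forall y, P y -> y = x) -> [pick y | P y] = Some x.
Proof. by move=> Px Pu; case: pickP => [y /Pu -> // | /(_ x)]; rewrite Px. Qed.

Lemma pick_preimage (T : finType) (U : eqType) (f : T -> U) x :
  injective f -> [pick y | f y == f x] = Some x.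
Proof. by move=> inj_f; apply: pick_unique => [|y /eqP /inj_f]. Qed.

Lemma double_count (I J : finType) (A : {set I}) (B : {set J}) (P : I -> J -> bool) :
  \sum_(j in B) #|[set i in A | P i j]| = \sum_(i in A) #|[set j in B | P i j]|.
Proof.
have sumP (T : finType) (X : {set T}) (Q : pred T) :
    #|[set x in X | Q x]| = \sum_(x in X) Q x.
  rewrite -sum1_card big_mkcond [RHS]big_mkcond /=; apply: eq_bigr => x _.
  by rewrite !inE; case: (x \in X); case: (Q x).
under eq_bigr do rewrite sumP; rewrite exchange_big /=.
by apply: eq_bigr => i _; rewrite sumP.
Qed.

Definition rank_embed (T U : finType) (TS : {set T}) (US : {set U}) (u0 : U) (x : T) : U :=
  nth u0 (enum US) (index x (enum TS)).

Section RankEmbed.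
Variables (T U : finType) (TS : {set T}) (US : {set U}) (u0 : U).
Hypothesis leTU : (#|TS| <= #|US|)%N.

Let index_lt x : x \in TS -> (index x (enum TS) < size (enum US))%N.
Proof. by move=> xT; rewrite -cardE (leq_trans _ leTU) // cardE index_mem mem_enum. Qed.

Lemma rank_embed_inj : {in TS &, injective (rank_embed TS US u0)}.
Proof.
move=> x y xT yT /eqP; rewrite nth_uniq ?enum_uniq ?index_lt // => /eqP e.
by rewrite -(nth_index x (_ : x \in enum TS)) ?e ?nth_index ?mem_enum.
Qed.

Lemma rank_embed_mem x : x \in TS -> rank_embed TS US u0 x \in US.
Proof. by move=> xT; rewrite -mem_enum mem_nth ?index_lt. Qed.

End RankEmbed.

(* Files, node contents and helper messages may range over arbitrary finite sets of at most
   [q ^ B], [q ^ a] and [q ^ b] elements: ranking the elements turns them into words. *)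
Section SetCode.
Variables (n k d q B a b : nat) (F A M : finType).
Variables (FS : {set F}) (AS : 'I_n -> {set A}) (enc : 'I_n -> F -> A).
Hypotheses (q_gt0 : (0 < q)%N) (card_FS : (q ^ B <= #|FS|)%N).
Hypotheses (card_AS : forall i, (#|AS i| <= q ^ a)%N).
Hypothesis enc_AS : forall i f, f \in FS -> enc i f \in AS i.
Hypothesis enc_rec : forall S : {set 'I_n}, #|S| = k -> {in FS &, forall f g,
  (forall i, i \in S -> enc i f = enc i g) -> f = g}.
Hypothesis enc_rep : forall (i : 'I_n) (H : {set 'I_n}), #|H| = d -> i \notin H ->
  exists (h : 'I_n -> A -> M) (MS : 'I_n -> {set M}),
    [/\ forall j, j \in H -> (#|MS j| <= q ^ b)%N,
        forall j f, j \in H -> f \in FS -> h j (enc j f) \in MS j &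
        {in FS &, forall f g, (forall j, j \in H -> h j (enc j f) = h j (enc j g)) ->
           enc i f = enc i g}].

Let o : 'I_q := Ordinal q_gt0.

Let FS_gt0 : (0 < #|FS|)%N.
Proof. by rewrite (leq_trans _ card_FS) // expn_gt0 q_gt0. Qed.

Let f0 : F := enum_default (Ordinal FS_gt0).

Let leF : (#|[set: {ffun 'I_B -> 'I_q}]| <= #|FS|)%N.
Proof. by rewrite cardsT card_ffun_ord. Qed.

Let leA i : (#|AS i| <= #|[set: {ffun 'I_a -> 'I_q}]|)%N.
Proof. by rewrite cardsT card_ffun_ord. Qed.

Let iF := rank_embed [set: {ffun 'I_B -> 'I_q}] FS f0.
Let iA i := rank_embed (AS i) [set: {ffun 'I_a -> 'I_q}] [ffun => o].
Let encq i x := iA i (enc i (iF x)).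

Let iF_inj : injective iF.
Proof. by move=> x y; apply: (rank_embed_inj leF); rewrite inE. Qed.

Let iF_FS x : iF x \in FS.
Proof. by apply: rank_embed_mem; rewrite ?inE. Qed.

Let iA_inj i : {in AS i &, injective (iA i)}.
Proof. exact: rank_embed_inj. Qed.

Let encq_rec (S : {set 'I_n}) : #|S| = k ->
  exists dec : {ffun 'I_n -> {ffun 'I_a -> 'I_q}} -> {ffun 'I_B -> 'I_q},
    forall f (y : {ffun 'I_n -> {ffun 'I_a -> 'I_q}}),
      (forall i, i \in S -> y i = encq i f) -> dec y = f.
Proof.
move=> cardS; exists (fun y => odflt [ffun => o] [pick x | [forall i in S, y i == encq i x]]).
move=> f y yf; case: pickP => [x /forallP /= yx | /(_ f) /forallP []] /=; last first.
  by move=> i; apply/implyP => iS; rewrite yf.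
apply: iF_inj; apply: (enc_rec cardS) => // i iS.
apply: (@iA_inj i); rewrite ?enc_AS //.
by have := implyP (yx i) iS; rewrite yf // => /eqP /esym.
Qed.

Let encq_rep (i : 'I_n) (H : {set 'I_n}) : #|H| = d -> i \notin H ->
  exists (h : 'I_n -> {ffun 'I_a -> 'I_q} -> {ffun 'I_b -> 'I_q})
         (rep : {ffun 'I_n -> {ffun 'I_b -> 'I_q}} -> {ffun 'I_a -> 'I_q}),
    forall f (m : {ffun 'I_n -> {ffun 'I_b -> 'I_q}}),
      (forall j, j \in H -> m j = h j (encq j f)) -> rep m = encq i f.
Proof.
move=> cardH iH; have [h [MS [card_MS h_MS h_rep]]] := enc_rep cardH iH.
pose kM j := rank_embed (MS j) [set: {ffun 'I_b -> 'I_q}] [ffun => o].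
have leM j : j \in H -> (#|MS j| <= #|[set: {ffun 'I_b -> 'I_q}]|)%N.
  by move=> jH; rewrite cardsT card_ffun_ord card_MS.
(* Helper [j] decodes its stored word back to [enc j f] before applying [h j]. *)
pose hq j y := if [pick x in AS j | iA j x == y] is Some x then kM j (h j x) else [ffun => o].
have hqE j x : hq j (encq j x) = kM j (h j (enc j (iF x))).
  rewrite /hq; case: pickP => [x0 /andP [x0A /eqP e] | /(_ (enc j (iF x)))].
    by rewrite (iA_inj x0A (enc_AS _ (iF_FS x)) e).
  by rewrite enc_AS //= eqxx.
exists hq, (fun m => odflt [ffun => o]
  (omap (encq i) [pick x | [forall j in H, m j == kM j (h j (enc j (iF x)))]])).
move=> f m mf; case: pickP => [x /forallP /= mx | /(_ f) /forallP []] /=; last first.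
  by move=> j; apply/implyP => jH; rewrite mf // hqE.
congr (iA i _); apply: h_rep => // j jH.
apply: (rank_embed_inj (u0 := [ffun => o]) (leM j jH)); rewrite ?h_MS //.
by have := implyP (mx j) jH; rewrite mf // hqE => /eqP /esym.
Qed.

Lemma is_exact_DSS_of_set_code : is_exact_DSS n k d q B a b.
Proof. by exists encq; split; [exact: encq_rec | exact: encq_rep]. Qed.

End SetCode.

Lemma is_exact_DSS_separates n k d q B a b : is_exact_DSS n k d q B a b ->
  exists enc : 'I_n -> {ffun 'I_B -> 'I_q} -> {ffun 'I_a -> 'I_q},
    (forall S : {set 'I_n}, #|S| = k ->
       forall f g, (forall i, i \in S -> enc i f = enc i g) -> f = g) /\
    (forall (i : 'I_n) (H : {set 'I_n}), #|H| = d -> i \notin H ->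
       exists h : 'I_n -> {ffun 'I_a -> 'I_q} -> {ffun 'I_b -> 'I_q},
         forall f g, (forall j, j \in H -> h j (enc j f) = h j (enc j g)) ->
           enc i f = enc i g).
Proof.
move=> [enc [rec rep]]; exists enc; split=> [S cardS f g efg | i H cardH iH].
  have [dec decP] := rec S cardS.
  by rewrite -(decP f [ffun i => enc i f]) ?(decP g) // => i iS; rewrite ffunE ?efg.
have [h [r rP]] := rep i H cardH iH; exists h => f g efg.
by rewrite -(rP f [ffun j => h j (enc j f)]) ?(rP g) // => j jH; rewrite ffunE ?efg.
Qed.

Definition first_elems (T : finType) (r : nat) (P : {set T}) : {set T} :=
  [set x in take r (enum P)].

Lemma first_elems_sub (T : finType) r (P : {set T}) : first_elems r P \subset P.
Proof. by apply/fintype.subsetP => x; rewrite inE => /mem_take; rewrite mem_enum. Qed.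

Lemma card_first_elems (T : finType) r (P : {set T}) : (r <= #|P|)%N -> #|first_elems r P| = r.
Proof.
move=> le_rP; rewrite /first_elems cardsE.
by move/card_uniqP: (take_uniq r (enum_uniq (mem P))) => ->; rewrite size_takel // -cardE.
Qed.

Section Injections.
Variables m n : nat.
Implicit Types (c : {ffun 'I_m -> 'I_n}) (g : {perm 'I_n}) (i : 'I_n) (H : {set 'I_n}).

Definition injections := [set c : {ffun 'I_m -> 'I_n} | injectiveb c].

Definition injections_through (i : 'I_n) := [set c in injections | i \in codom c].

Definition relabel (g : {perm 'I_n}) c : {ffun 'I_m -> 'I_n} := [ffun p => g (c p)].

Lemma injections_gt0 : (m <= n)%N -> (0 < #|injections|)%N.
Proof.
move=> le_mn; rewrite card_gt0; apply/set0Pn; exists [ffun p => widen_ord le_mn p].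
by rewrite inE; apply/injectiveP => p1 p2; rewrite !ffunE => /(congr1 val) /= /val_inj.
Qed.

Lemma relabel_inj g : injective (relabel g).
Proof. by move=> c1 c2 /ffunP e; apply/ffunP => p; have := e p; rewrite !ffunE => /perm_inj. Qed.

Lemma relabel_injections g c : (relabel g c \in injections) = (c \in injections).
Proof.
rewrite !inE; apply/injectiveP/injectiveP => inj_c p1 p2 e; apply: inj_c => //.
by rewrite !ffunE e.
by move: e; rewrite !ffunE => /perm_inj.
Qed.

Lemma relabel_codom g c i : (g i \in codom (relabel g c)) = (i \in codom c).
Proof.
apply/codomP/codomP => [[p] | [p ->]]; last by exists p; rewrite ffunE.
by rewrite ffunE => /perm_inj ->; exists p.
Qed.

Lemma card_injections_through i i' :
  #|injections_through i| = #|injections_through i'|.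
Proof.
suff le_through i1 i2 : (#|injections_through i1| <= #|injections_through i2|)%N.
  by apply/eqP; rewrite eqn_leq !le_through.
rewrite -(card_imset _ (@relabel_inj (tperm i1 i2))); apply: subset_leq_card.
apply/fintype.subsetP => y /imsetP [c]; rewrite inE => /andP [inj_c ic] ->.
by rewrite inE -[X in X \in codom _](tpermL i1 i2) relabel_codom relabel_injections inj_c.
Qed.

Lemma sum_card_injections_through :
  \sum_(i in [set: 'I_n]) #|injections_through i| = (m * #|injections|)%N.
Proof.
rewrite (double_count _ _ (fun c i => i \in codom c)) mulnC -sum_nat_const.
apply: eq_bigr => c; rewrite inE => /injectiveP inj_c.
rewrite -[RHS](card_ord m) -(card_codom inj_c); apply: eq_card => i; by rewrite !inE.
Qed.

Lemma card_preim_injection c H :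
  c \in injections -> (#|H| + m <= #|[set p | c p \in H]| + n)%N.
Proof.
rewrite inE => /injectiveP inj_c.
have : (#|~: [set p | c p \in H]| <= #|~: H|)%N.
  rewrite -(card_imset _ inj_c); apply: subset_leq_card.
  by apply/fintype.subsetP => y /imsetP [p]; rewrite !inE => pH ->.
by have := cardsC H; have := cardsC [set p | c p \in H]; rewrite !card_ord; lia.
Qed.

Definition helper_positions r H c := first_elems r [set p | c p \in H].

Definition copies_served r i H (j : 'I_n) :=
  [set c in injections_through i | j \in c @: helper_positions r H c].

Lemma card_copies_served r i H j j' : i \notin H -> j \in H -> j' \in H ->
  #|copies_served r i H j| = #|copies_served r i H j'|.
Proof.
move=> iH; suff le_served j1 j2 : j1 \in H -> j2 \in H ->
    (#|copies_served r i H j1| <= #|copies_served r i H j2|)%N.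
  by move=> jH j'H; apply/eqP; rewrite eqn_leq !le_served.
move=> j1H j2H; have g_H x : (tperm j1 j2 x \in H) = (x \in H).
  by case: tpermP => [-> | -> | _ _]; rewrite ?j1H ?j2H.
have g_i : tperm j1 j2 i = i by apply: tpermD; apply: contraNneq iH => <-.
have helper_g c : helper_positions r H (relabel (tperm j1 j2) c) = helper_positions r H c.
  by congr first_elems; apply/setP => p; rewrite !inE ffunE g_H.
rewrite -(card_imset _ (@relabel_inj (tperm j1 j2))); apply: subset_leq_card.
apply/fintype.subsetP => y /imsetP [c c_served ->].
rewrite inE in c_served; case/andP: c_served => c_thr /imsetP [p pQ cp].
rewrite inE in c_thr; case/andP: c_thr => inj_c ic.
rewrite inE [_ \in injections_through _]inE -{1}g_i relabel_codom relabel_injections.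
by rewrite inj_c ic helper_g; apply/imsetP; exists p; rewrite // ffunE -cp tpermL.
Qed.

Lemma sum_card_copies_served r i H :
  {in injections_through i, forall c, r <= #|[set p | c p \in H]|}%N ->
  \sum_(j in H) #|copies_served r i H j| = (r * #|injections_through i|)%N.
Proof.
move=> le_r; rewrite (double_count _ _ (fun c j => j \in c @: helper_positions r H c)).
rewrite mulnC -sum_nat_const; apply: eq_bigr => c c_thr.
have := c_thr; rewrite inE => /andP [+ _]; rewrite inE => /injectiveP inj_c.
rewrite -[RHS](card_first_elems (le_r c c_thr)) -(card_imset _ inj_c).
apply: eq_card => j; rewrite !inE andb_idl // => /imsetP [p pQ ->].
by have := fintype.subsetP (first_elems_sub _ _) p pQ; rewrite inE.
Qed.

End Injections.

Section Lift.
Variables (q m n k0 k d0 d B a b : nat) (i0 : 'I_n).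
Hypotheses (q_gt0 : (0 < q)%N) (le_k : (k0 + n <= k + m)%N) (le_d : (d0 + n <= d + m)%N).
Variable enc0 : 'I_m -> {ffun 'I_B -> 'I_q} -> {ffun 'I_a -> 'I_q}.
Hypothesis rec0 : forall S : {set 'I_m}, #|S| = k0 ->
  forall f g, (forall p, p \in S -> enc0 p f = enc0 p g) -> f = g.
Hypothesis rep0 : forall (p : 'I_m) (Q : {set 'I_m}), #|Q| = d0 -> p \notin Q ->
  exists h : 'I_m -> {ffun 'I_a -> 'I_q} -> {ffun 'I_b -> 'I_q},
    forall f g, (forall p', p' \in Q -> h p' (enc0 p' f) = h p' (enc0 p' g)) ->
      enc0 p f = enc0 p g.

Local Notation copy := {ffun 'I_m -> 'I_n}.
Local Notation cnt := #|injections_through m i0|.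

Let o : 'I_q := Ordinal q_gt0.

(* One copy of the small code for each injection [c] of its [m] nodes into the [n] nodes;
   node [i] stores, for every copy through it, the content of the small node mapped to [i].
   The entries indexed by non-injective [c] are pinned to a constant. *)
Definition lift_files := [set f : {ffun copy -> {ffun 'I_B -> 'I_q}} |
  [forall c, (c \notin injections m n) ==> (f c == [ffun => o])]].

Definition lift_contents (i : 'I_n) := [set x : {ffun copy -> {ffun 'I_a -> 'I_q}} |
  [forall c, (c \notin injections_through m i) ==> (x c == [ffun => o])]].

Definition lift_enc (i : 'I_n) (f : {ffun copy -> {ffun 'I_B -> 'I_q}}) :=
  [ffun c : copy => if injectiveb c then
     (if [pick p | c p == i] is Some p then enc0 p (f c) else [ffun => o])
   else [ffun => o]].

Lemma lift_encE i f (c : copy) p :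
  injectiveb c -> c p = i -> lift_enc i f c = enc0 p (f c).
Proof.
by move=> inj_c <-; rewrite ffunE inj_c; move/injectiveP: inj_c => /pick_preimage ->.
Qed.

Lemma lift_enc_contents i f : lift_enc i f \in lift_contents i.
Proof.
rewrite inE; apply/forallP => c; apply/implyP; rewrite ffunE !inE.
case: (injectiveb c) => //=; case: pickP => //= p /eqP cp.
by rewrite -cp codom_f.
Qed.

Lemma lift_enc_rec (S : {set 'I_n}) : #|S| = k -> {in lift_files &, forall f g,
  (forall i, i \in S -> lift_enc i f = lift_enc i g) -> f = g}.
Proof.
move=> cardS f g fF gF efg; apply/ffunP => c.
case inj_c: (c \in injections m n); last first.
  have junk h : h \in lift_files -> h c = [ffun => o].
    by rewrite inE => /forallP/(_ c); rewrite inj_c => /eqP.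
  by rewrite !junk.
have le_k0 : (k0 <= #|[set p | c p \in S]|)%N.
  have := card_preim_injection S inj_c.
  by rewrite cardS => /(leq_trans le_k); rewrite leq_add2r.
rewrite inE in inj_c; apply: (rec0 (card_first_elems le_k0)) => p pS.
have := fintype.subsetP (first_elems_sub _ _) p pS; rewrite inE => cpS.
by rewrite -!(@lift_encE (c p)) // efg.
Qed.

Section Repair.
Variables (i : 'I_n) (H : {set 'I_n}).
Hypotheses (cardH : #|H| = d) (iH : i \notin H).

Local Notation Q := (helper_positions d0 H).

Lemma le_d0_preim (c : copy) : c \in injections m n -> (d0 <= #|[set p | c p \in H]|)%N.
Proof.
move=> inj_c; have := card_preim_injection H inj_c.
by rewrite cardH => /(leq_trans le_d); rewrite leq_add2r.
Qed.

Lemma card_copies_served_lift j :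
  j \in H -> #|copies_served m d0 i H j| = (d0 * cnt %/ d)%N.
Proof.
move=> jH; have d_gt0 : (0 < d)%N by rewrite -cardH card_gt0; apply/set0Pn; exists j.
have le_d0 c : c \in injections_through m i -> (d0 <= #|[set p | c p \in H]|)%N.
  by rewrite inE => /andP [inj_c _]; apply: le_d0_preim.
have := sum_card_copies_served le_d0.
rewrite (eq_bigr _ (fun j' j'H => card_copies_served m d0 iH j'H jH)) sum_nat_const cardH.
by rewrite (card_injections_through m i i0) => <-; rewrite mulKn.
Qed.

Lemma lift_copy_repair :
  exists hh : copy -> 'I_m -> {ffun 'I_a -> 'I_q} -> {ffun 'I_b -> 'I_q},
  forall (c : copy) p, injectiveb c -> c p = i -> forall f g,
    (forall p', p' \in Q c -> hh c p' (enc0 p' f) = hh c p' (enc0 p' g)) -> enc0 p f = enc0 p g.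
Proof.
suff: forall c : copy, exists h0 : 'I_m -> {ffun 'I_a -> 'I_q} -> {ffun 'I_b -> 'I_q},
    forall p, injectiveb c -> c p = i -> forall f g,
      (forall p', p' \in Q c -> h0 p' (enc0 p' f) = h0 p' (enc0 p' g)) -> enc0 p f = enc0 p g.
  by case/fin_all_exists => hh hhP; exists hh.
move=> c.
case: (boolP [exists p, injectiveb c && (c p == i)]) => [|none].
  case/existsP=> p /andP [inj_c /eqP cp].
  have pQ : p \notin Q c.
    by apply: contra iH => /(fintype.subsetP (first_elems_sub _ _)); rewrite inE cp.
  have cardQ : #|Q c| = d0 by apply: card_first_elems; apply: le_d0_preim; rewrite inE.
  have [h0 h0P] := rep0 cardQ pQ; exists h0 => p' inj_c' cp'.
  by have -> : p' = p by move/injectiveP: inj_c; apply; rewrite cp cp'.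
exists (fun _ _ => [ffun => o]) => p inj_c cp.
by move/existsPn: none => /(_ p); rewrite inj_c cp eqxx.
Qed.

Lemma lift_enc_rep : exists (h : 'I_n -> {ffun copy -> {ffun 'I_a -> 'I_q}} ->
                                {ffun copy -> {ffun 'I_b -> 'I_q}})
                            (MS : 'I_n -> {set {ffun copy -> {ffun 'I_b -> 'I_q}}}),
  [/\ forall j, j \in H -> (#|MS j| <= q ^ (b * (d0 * cnt %/ d)))%N,
      forall j f, j \in H -> f \in lift_files -> h j (lift_enc j f) \in MS j &
      {in lift_files &, forall f g,
         (forall j, j \in H -> h j (lift_enc j f) = h j (lift_enc j g)) ->
         lift_enc i f = lift_enc i g}].
Proof.
have [hh hhP] := lift_copy_repair.
(* Helper [j] serves exactly the copies through [i] in whose helper set it lies. *)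
pose h j (x : {ffun copy -> {ffun 'I_a -> 'I_q}}) := [ffun c : copy =>
  if c \in injections_through m i then
    (if [pick p in Q c | c p == j] is Some p then hh c p (x c) else [ffun => o])
  else [ffun => o]].
pose MS j := [set y : {ffun copy -> {ffun 'I_b -> 'I_q}} |
  [forall c, (c \notin copies_served m d0 i H j) ==> (y c == [ffun => o])]].
have pick_pos (c : copy) p :
    injectiveb c -> p \in Q c -> [pick p0 in Q c | c p0 == c p] = Some p.
  move=> inj_c pQ; apply: pick_unique => [|p' /andP [_ /eqP]]; first by rewrite pQ eqxx.
  by move/injectiveP: inj_c; apply.
exists h, MS; split.
- move=> j jH; rewrite card_ffun_default card_ffun_ord -expnM.
  by rewrite card_copies_served_lift.
- move=> j f jH _; rewrite inE; apply/forallP => c; apply/implyP; rewrite ffunE inE.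
  case: (c \in injections_through m i) => //=; case: pickP => //= p /andP [pQ /eqP <-].
  by rewrite imset_f.
move=> f g _ _ efg; apply/ffunP => c; rewrite !ffunE.
case inj_c: (injectiveb c) => //; case: pickP => // p /eqP cp.
have c_thr : c \in injections_through m i by rewrite !inE inj_c -cp codom_f.
apply: (hhP c p inj_c cp) => p' p'Q.
have := fintype.subsetP (first_elems_sub _ _) p' p'Q; rewrite inE => cp'H.
move/ffunP: (efg _ cp'H) => /(_ c); rewrite !ffunE c_thr pick_pos // inj_c.
by move/injectiveP: inj_c => /pick_preimage ->.
Qed.

End Repair.

Lemma is_exact_DSS_lift :
  is_exact_DSS n k d q (B * #|injections m n|) (a * cnt) (b * (d0 * cnt %/ d)).
Proof.
apply: (@is_exact_DSS_of_set_code _ _ _ _ _ _ _ _ _ _ lift_files lift_contents lift_enc) => //.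
- by rewrite card_ffun_default card_ffun_ord expnM.
- by move=> i; rewrite card_ffun_default card_ffun_ord expnM (card_injections_through m i i0).
- by move=> i f _; apply: lift_enc_contents.
- exact: lift_enc_rec.
exact: lift_enc_rep.
Qed.

End Lift.

Lemma prime_power_gt1 q : prime_power q -> (1 < q)%N.
Proof.
move=> [p [e [p_pr [e_gt0 ->]]]]; apply: leq_trans (prime_gt1 p_pr) _.
by rewrite -{1}(expn1 p) leq_pexp2l // prime_gt0.
Qed.

Lemma is_exact_DSS0 n k d : is_exact_DSS n k d 2 0 0 0.
Proof.
have ffun0 (T : Type) (f g : {ffun 'I_0 -> T}) : f = g by apply/ffunP => -[].
exists (fun _ _ => [ffun x => ord0]); split=> [S _ | i H _ _].
  by exists (fun _ => [ffun x => ord0]) => *; apply: ffun0.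
by exists (fun _ _ => [ffun x => ord0]), (fun _ => [ffun x => ord0]) => *; apply: ffun0.
Qed.

(* Any [k] nodes determine the file, hence [q ^ B <= (q ^ a) ^ k]. *)
Lemma is_exact_DSS_file_bound n k d q B a b : (1 < q)%N -> (k <= n)%N ->
  is_exact_DSS n k d q B a b -> (B <= a * k)%N.
Proof.
move=> q_gt1 le_kn /is_exact_DSS_separates [enc [rec _]].
have cardS : #|first_elems k [set: 'I_n]| = k by rewrite card_first_elems // cardsT card_ord.
pose restr f := [ffun i : 'I_#|first_elems k [set: 'I_n]| => enc (enum_val i) f].
have /leq_card : injective restr.
  move=> f g /ffunP efg; apply: (rec _ cardS) => i iS.
  by have := efg (enum_rank_in iS i); rewrite !ffunE enum_rankK_in.
by rewrite card_ffun_ord card_ffun card_ffun_ord card_ord cardS -expnM leq_exp2l.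
Qed.

Local Open Scope ring_scope.

Section Achievable.
Variables (R : realType) (alpha gamma : R).
Hypotheses (alpha_ge0 : 0 <= alpha) (gamma_ge0 : 0 <= gamma).

Lemma achievable_sizes0 n k d : achievable_sizes n k d alpha gamma 0.
Proof.
exists 2%N, 1%N, 0%N, 0%N, 0%N; rewrite !mul0r; split; first by exists 2%N, 1%N.
by do 3 split=> //; [rewrite divr_ge0 | split; first exact: is_exact_DSS0].
Qed.

Lemma achievable_sizes_ub n k d : (k <= n)%N ->
  ubound (achievable_sizes n k d alpha gamma) (k%:R * alpha).
Proof.
move=> le_kn _ [q [L [B [a [b [q_pp [L_gt0 [le_a [_ [dss ->]]]]]]]]]].
have le_B := is_exact_DSS_file_bound (prime_power_gt1 q_pp) le_kn dss.
have L_gt0' : (0 : R) < L%:R by rewrite ltr0n.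
rewrite ler_pdivrMr //; rewrite ler_pdivrMr // in le_a.
have : (B%:R : R) <= a%:R * k%:R by rewrite -natrM ler_nat.
have : (0 : R) <= k%:R by [].
nra.
Qed.

Lemma has_sup_achievable_sizes n k d : (k <= n)%N ->
  has_sup (achievable_sizes n k d alpha gamma).
Proof.
move=> le_kn; split; first by exists 0; apply: achievable_sizes0.
by exists (k%:R * alpha); apply: achievable_sizes_ub.
Qed.

End Achievable.

Lemma sup_scale_le (R : realType) (S S' : set R) (c : R) : 0 < c ->
  (S' !=set0)%classic -> has_sup S -> (forall x, S' x -> S (c * x)) -> c * sup S' <= sup S.
Proof.
move=> c_gt0 S'_n0 supS cS; rewrite -ler_pdivlMl //; apply: ge_sup => // x S'x.
by rewrite ler_pdivlMl //; apply: sup_upper_bound => //; apply: cS.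
Qed.

Lemma achievable_sizes_lift (R : realType) (alpha gamma : R) m n k0 k d0 d x :
  (0 < m)%N -> (m <= n)%N -> (0 < d0)%N ->
  (k0 + n <= k + m)%N -> (d0 + n <= d + m)%N ->
  achievable_sizes m k0 d0 alpha gamma x ->
  achievable_sizes n k d alpha gamma (n%:R / m%:R * x).
Proof.
move=> m_gt0 le_mn d0_gt0 le_k le_d [q [L [B [a [b [q_pp [L_gt0 [le_a [le_b [dss ->]]]]]]]]]].
have i0 : 'I_n by exists 0%N; apply: leq_trans le_mn.
pose N := #|injections m n|; pose cnt := #|injections_through m i0|.
have N_gt0 : (0 < N)%N by apply: injections_gt0.
(* Double counting of the pairs (node, injection through it). *)
have cntE : (n * cnt = m * N)%N.
  rewrite -sum_card_injections_through.
  by rewrite (eq_bigr _ (fun i _ => card_injections_through m i i0)) sum_nat_const cardsT card_ord.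
have cnt_gt0 : (0 < cnt)%N by move: (N_gt0); rewrite -(ltn_pmul2l m_gt0) -cntE muln0; lia.
have d_gt0 : (0 < d)%N by lia.
have [enc0 [rec0 rep0]] := is_exact_DSS_separates dss.
have q_gt0 : (0 < q)%N by have := prime_power_gt1 q_pp; lia.
have dss' := is_exact_DSS_lift i0 q_gt0 le_k le_d rec0 rep0.
exists q, (L * cnt)%N, (B * N)%N, (a * cnt)%N, (b * (d0 * cnt %/ d))%N.
have [L_gt0' cnt_gt0' m_gt0' d_gt0' d0_gt0'] : [/\ (0 : R) < L%:R, (0 : R) < cnt%:R,
   (0 : R) < m%:R, (0 : R) < d%:R & (0 : R) < d0%:R] by rewrite !ltr0n.
have le_div : ((d0 * cnt %/ d)%:R : R) * d%:R <= d0%:R * cnt%:R.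
  by rewrite -!natrM ler_nat leq_trunc_div.
have NE : (N%:R : R) = n%:R * cnt%:R / m%:R.
  by apply: (mulIf (lt0r_neq0 m_gt0')); rewrite divfK ?lt0r_neq0 // -!natrM mulnC cntE mulnC.
split=> //; split; first by rewrite muln_gt0 L_gt0.
split; first by rewrite !natrM -mulf_div divff ?lt0r_neq0 ?mulr1.
split; last by split=> //; rewrite !natrM NE; field; rewrite !lt0r_neq0.
rewrite !natrM ler_pdivrMr ?mulr_gt0 // mulrAC ler_pdivlMr //.
rewrite ler_pdivrMr // mulrAC ler_pdivlMr // in le_b.
have : (0 : R) <= b%:R by [].
nra.
Qed.

Theorem theorem3p1 (R : realType) (n k d j : nat) (alpha gamma : R) :
  (1 <= k)%N -> (k <= d)%N -> (d < n)%N ->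
  0 < alpha -> 0 < gamma ->
  (j <= k - 1)%N ->
  n%:R / (n - j)%:R * C_exact (n - j) (k - j) (d - j) alpha gamma
    <= C_exact n k d alpha gamma.
Proof.
move=> k_ge1 le_kd lt_dn alpha_gt0 gamma_gt0 le_jk.
have [alpha_ge0 gamma_ge0] := (ltW alpha_gt0, ltW gamma_gt0).
apply: sup_scale_le.
- by rewrite divr_gt0 // ltr0n; lia.
- by exists 0; apply: achievable_sizes0.
- by apply: has_sup_achievable_sizes => //; lia.
by move=> x; apply: achievable_sizes_lift; lia.
Qed.
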